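(* Let $\mathfrak W=(W_s)_{s\in\mathcal S}$ be an arbitrarily varying channel with input alphabet $\mathcal A$, output alphabet $\mathcal B$ and finite state set $\mathcal S$. Let $T\in C(\mathcal A',\mathcal A)$ be a channel, and let $\mathfrak W'$ be the arbitrarily varying channel with input alphabet $\mathcal A'$, output alphabet $\mathcal B$ and state set $\mathcal S$ given by $w'(b|a',s):=\sum_{a\in\mathcal A}w(b|a,s)t(a|a')$ (i.e. $W'_s=W_s\circ T$). If $\mathfrak W$ is symmetrizable, then $\mathfrak W'$ is symmetrizable.
   Context: All sets are finite. $C(\mathcal A,\mathcal B)$ is the set of channels (stochastic matrices $w(b|a)$) from $\mathcal A$ to $\mathcal B$; $w(b|a,s)$ denotes the transition probability of $W_s$. An arbitrarily varying channel $(W_s)_{s\in\mathcal S}$ with input alphabet $\mathcal A$ is symmetrizable if there is $U\in C(\mathcal A,\mathcal S)$ with $\sum_su(s|a)w(b|a',s)=\sum_su(s|a')w(b|a,s)$ for all $a,a'\in\mathcal A$, $b\in\mathcal B$. *)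

From mathcomp Require Import all_boot all_order all_algebra.
From mathcomp Require Import reals.
Set Implicit Arguments. Unset Strict Implicit. Unset Printing Implicit Defensive.
Import Order.TTheory GRing.Theory Num.Theory.
Local Open Scope ring_scope.

(* A channel from A to B: a stochastic matrix w(b|a), stored as w a b. *)
Definition is_channel (R : realType) (A B : finType) (w : A -> B -> R) : Prop :=
  (forall a b, 0 <= w a b) /\ (forall a, \sum_(b : B) w a b = 1).

(* An arbitrarily varying channel: for each state s, W_s is a channel;
   stored as W a s b = w(b|a,s). *)
Definition is_avc (R : realType) (A S B : finType) (W : A -> S -> B -> R) : Prop :=
  forall s : S, is_channel (fun a b => W a s b).

(* Symmetrizability: exists U in C(A,S) (u a s = u(s|a)) with
   sum_s u(s|a) w(b|a',s) = sum_s u(s|a') w(b|a,s). *)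
Definition symmetrizable (R : realType) (A S B : finType) (W : A -> S -> B -> R) : Prop :=
  exists u : A -> S -> R, is_channel u /\
    forall (a a' : A) (b : B),
      \sum_(s : S) u a s * W a' s b = \sum_(s : S) u a' s * W a s b.

Definition precompose (R : realType) (A' A S B : finType)
  (W : A -> S -> B -> R) (t : A' -> A -> R) : A' -> S -> B -> R :=
  fun a' s b => \sum_(a : A) W a s b * t a' a.

(* If U symmetrizes W then T U, i.e. u'(s|a') = sum_a t(a|a') u(s|a), symmetrizes
   W o T: both sides of the symmetrizability identity for W o T at (a1, a2) expand
   to double sums over (a, c) of t(a|a1) t(c|a2) times one side of the identity
   for W at (a, c), and the two sides are exchanged by swapping a and c. *)
From mathcomp Require Import all_boot all_order all_algebra.
From mathcomp Require Import reals.
Local Open Scope ring_scope.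
Import GRing.Theory Num.Theory.
Set Implicit Arguments. Unset Strict Implicit.

Definition compose_channel (R : realType) (A' A S : finType)
  (t : A' -> A -> R) (u : A -> S -> R) : A' -> S -> R :=
  fun a' s => \sum_(a : A) t a' a * u a s.

Lemma is_channel_compose (R : realType) (A' A S : finType)
  (t : A' -> A -> R) (u : A -> S -> R) :
  is_channel t -> is_channel u -> is_channel (compose_channel t u).
Proof.
move=> [t_ge0 t_sum1] [u_ge0 u_sum1]; split.
  by move=> a' s; apply: sumr_ge0 => a _; rewrite mulr_ge0.
move=> a'; rewrite /compose_channel exchange_big /=.
under eq_bigr => a _ do rewrite -big_distrr /= u_sum1 mulr1.
exact: t_sum1.
Qed.

Lemma sum_compose_precompose (R : realType) (A' A S B : finType)
  (W : A -> S -> B -> R) (t : A' -> A -> R) (u : A -> S -> R) a1 a2 b :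
  \sum_(s : S) compose_channel t u a1 s * precompose W t a2 s b =
  \sum_(a : A) \sum_(c : A) t a1 a * t a2 c * \sum_(s : S) u a s * W c s b.
Proof.
rewrite /compose_channel /precompose.
under eq_bigr => s _ do rewrite big_distrlr /=.
rewrite exchange_big /=; apply: eq_bigr => a _.
rewrite exchange_big /=; apply: eq_bigr => c _.
rewrite big_distrr /=; apply: eq_bigr => s _.
by rewrite -!mulrA; congr (_ * _); rewrite [W c s b * _]mulrC mulrCA.
Qed.

Theorem lemma3 (R : realType) (A A' S B : finType)
  (W : A -> S -> B -> R) (t : A' -> A -> R) :
  is_avc W -> is_channel t -> symmetrizable W ->
  symmetrizable (precompose W t).
Proof.
move=> _ t_channel [u [u_channel u_symm]].
exists (compose_channel t u); split; first exact: is_channel_compose.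
move=> a1 a2 b; rewrite !sum_compose_precompose exchange_big /=.
apply: eq_bigr => a _; apply: eq_bigr => c _.
by rewrite [t a1 _ * _]mulrC u_symm.
Qed.
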